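(* Let $\mu=(p,q,r,s)\in\mathbb{R}^4$ with $(p,q,r)\neq(0,0,0)$. For all $\varepsilon>0$ and $K>0$ there exists a real triple $(x_1,x_2,x_3)\in\mathbb{R}^3$ with $x_1^2+x_2^2+x_3^2+x_1x_2x_3=px_1+qx_2+rx_3+s$ such that, for some labelling $\{i,j,k\}=\{1,2,3\}$, one has $-(2+\varepsilon)<x_i<-2$, $x_jx_k>0$, $|x_j|>K$ and $|x_k|>K$. *)

From Stdlib Require Import Reals.
Open Scope R_scope.

Definition on_surface (p q r s x1 x2 x3 : R) : Prop :=
  x1^2 + x2^2 + x3^2 + x1*x2*x3 = p*x1 + q*x2 + r*x3 + s.

Definition good_label (eps K xi xj xk : R) : Prop :=
  -(2+eps) < xi < -2 /\ xj * xk > 0 /\ Rabs xj > K /\ Rabs xk > K.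

(* Fix x1 = a slightly below -2 and x2 = X large.  The equation of the surface
   is then a monic quadratic in x3 whose discriminant is
   (a^2 - 4) X^2 + O(X), positive for large X since a^2 > 4; its larger root
   is at least -(a X - r)/2 > X + r/2, hence large and positive as well. *)
From Stdlib Require Import Reals Lra Psatz.
Open Scope R_scope.

Lemma monic_quadratic_root (b c : R) :
  0 <= b*b - 4*c -> exists x, x*x + b*x + c = 0 /\ -b/2 <= x.
Proof.
  intros hdisc.
  exists ((-b + sqrt (b*b - 4*c))/2).
  assert (hsq := sqrt_sqrt _ hdisc).
  assert (hpos := sqrt_pos (b*b - 4*c)).
  split; nra.
Qed.

Lemma quadratic_nonneg_large (A B C X : R) :
  0 < A -> 1 <= X -> Rabs B + Rabs C <= A*X -> 0 <= A*X*X + B*X + C.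
Proof.
  intros hA hX hAX.
  assert (hB : - B <= Rabs B) by (rewrite <- Rabs_Ropp; apply Rle_abs).
  assert (hC : - C <= Rabs C) by (rewrite <- Rabs_Ropp; apply Rle_abs).
  assert (hC0 := Rabs_pos C).
  nra.
Qed.

Lemma on_surface_slice (p q r s a X x3 : R) :
  x3*x3 + (a*X - r)*x3 + (a*a + X*X - p*a - q*X - s) = 0 ->
  on_surface p q r s a X x3.
Proof. unfold on_surface; intros h; nra. Qed.

Lemma on_surface_large_coords (p q r s a K : R) :
  a < -2 -> exists X x3, K < X /\ K < x3 /\ on_surface p q r s a X x3.
Proof.
  intros ha.
  set (A := a*a - 4).
  set (B := 4*q - 2*a*r).
  set (C := r*r - 4*(a*a - p*a - s)).
  assert (hA : 0 < A) by (unfold A; nra).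
  assert (hBC : 0 <= (Rabs B + Rabs C)/A).
  { apply Rmult_le_pos; [| left; apply Rinv_0_lt_compat; exact hA].
    assert (h1 := Rabs_pos B); assert (h2 := Rabs_pos C); lra. }
  set (X := 1 + Rabs K + Rabs r + (Rabs B + Rabs C)/A).
  assert (hK := Rle_abs K); assert (hr : - r <= Rabs r).
  { rewrite <- Rabs_Ropp; apply Rle_abs. }
  assert (hr0 := Rabs_pos r); assert (hK0 := Rabs_pos K).
  assert (hAX : Rabs B + Rabs C <= A*X).
  { replace (A*X) with (A*(1 + Rabs K + Rabs r) + (Rabs B + Rabs C))
      by (unfold X; field; lra).
    nra. }
  assert (hdisc : 0 <= (a*X - r)*(a*X - r) - 4*(a*a + X*X - p*a - q*X - s)).
  { replace ((a*X - r)*(a*X - r) - 4*(a*a + X*X - p*a - q*X - s))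
      with (A*X*X + B*X + C) by (unfold A, B, C; ring).
    apply quadratic_nonneg_large; unfold X in *; lra. }
  destruct (monic_quadratic_root _ _ hdisc) as [x3 [hroot hx3]].
  exists X, x3; split; [|split].
  - unfold X; lra.
  - assert (2*X <= -a*X) by (unfold X in *; nra).
    unfold X in *; lra.
  - exact (on_surface_slice p q r s a X x3 hroot).
Qed.

Theorem lemma5p1 (p q r s : R) (hpqr : ~ (p = 0 /\ q = 0 /\ r = 0)) :
  forall eps K : R, eps > 0 -> K > 0 ->
  exists x1 x2 x3 : R,
    on_surface p q r s x1 x2 x3 /\
    (good_label eps K x1 x2 x3 \/ good_label eps K x2 x1 x3 \/
     good_label eps K x3 x1 x2).
Proof.
  intros eps K heps hK.
  destruct (on_surface_large_coords p q r s (-2 - eps/2) K)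
    as [X [x3 [hX [hx3 hsurf]]]]; [lra|].
  exists (-2 - eps/2), X, x3; split; [exact hsurf|].
  left; repeat split; try lra.
  - nra.
  - rewrite Rabs_right; lra.
  - rewrite Rabs_right; lra.
Qed.
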